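(* For every integer $n\geq 3$, $$\dot{\imath}_{[1,2]}(P_3\Box P_n)=\begin{cases}\left\lfloor \frac{3n+8}{4}\right\rfloor & \text{if } n\equiv 2 \pmod 4,\\[2pt] \left\lfloor \frac{3n+4}{4}\right\rfloor & \text{otherwise.}\end{cases}$$
   Context: $P_k$ denotes the path on $k$ vertices and $P_m\Box P_n$ the Cartesian product of two paths (the $m\times n$ grid graph). A set $S$ of vertices of a graph $G$ is independent if no two vertices of $S$ are adjacent, and dominating if every vertex not in $S$ has at least one neighbor in $S$. An independent $[1,2]$-set of $G$ is an independent dominating set $S$ such that every vertex $v\in V(G)\setminus S$ has at least one and at most two neighbors in $S$. When $G$ has an independent $[1,2]$-set, $\dot{\imath}_{[1,2]}(G)$ denotes the minimum cardinality of an independent $[1,2]$-set of $G$ (the statement includes the existence of such a set). *)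

From mathcomp Require Import all_boot.
Set Implicit Arguments. Unset Strict Implicit. Unset Printing Implicit Defensive.

Definition nbhd (T : finType) (adj : rel T) (v : T) : {set T} := [set u | adj v u].

Definition independent (T : finType) (adj : rel T) (S : {set T}) : Prop :=
  forall u v, u \in S -> v \in S -> ~~ adj u v.

Definition indep12_set (T : finType) (adj : rel T) (S : {set T}) : Prop :=
  independent adj S /\
  forall v, v \notin S -> 1 <= #|nbhd adj v :&: S| <= 2.

Definition i12_number_is (T : finType) (adj : rel T) (k : nat) : Prop :=
  (exists S : {set T}, indep12_set adj S /\ #|S| = k) /\
  (forall S : {set T}, indep12_set adj S -> k <= #|S|).

Definition path_adj (k : nat) : rel 'I_k :=
  fun i j => (i.+1 == j :> nat) || (j.+1 == i :> nat).

Definition grid_adj (m n : nat) : rel ('I_m * 'I_n) :=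
  fun x y => ((x.1 == y.1) && path_adj x.2 y.2)
          || ((x.2 == y.2) && path_adj x.1 y.1).

(* Read column by column, a vertex set of P_3 □ P_n is a word over the 8 subsets of a
   3-vertex column, and it is an independent [1,2]-set iff every column, together with its two
   neighbouring columns, satisfies a local condition.  Hence i_[1,2](P_3 □ P_n) is a min-plus
   shortest-path value over the 64 pairs of consecutive columns.  Running this transfer, the cost
   vector after 10 columns is the one after 6 columns plus 3 entrywise, so the minimum grows by
   exactly 3 every 4 columns from n = 7 on; the values for 3 <= n <= 10 are computed outright.
   Sets attaining the bound repeat the 4-column block (rows 0 and 2 | empty | row 1 | empty). *)

From mathcomp Require Import all_boot zify.
Set Implicit Arguments. Unset Strict Implicit. Unset Printing Implicit Defensive.

Definition vertex_ok (inS : bool) (k : nat) : bool := if inS then k == 0 else 1 <= k <= 2.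

Lemma indep12_setP (T : finType) (adj : rel T) (S : {set T}) :
  indep12_set adj S <-> forall v, vertex_ok (v \in S) #|nbhd adj v :&: S|.
Proof.
rewrite /indep12_set /independent /vertex_ok; split.
  move=> [indS nbS] v; case: ifP => vS; last by apply: nbS; rewrite vS.
  rewrite cards_eq0; apply/eqP/setP => u; rewrite !inE.
  by apply/negbTE/negP => /andP[vu uS]; move: (indS _ _ vS uS); rewrite vu.
move=> ok; split=> [u v uS vS|v vS]; last by have := ok v; rewrite (negbTE vS).
by apply/negP => uv; have := ok u; rewrite uS cards_eq0 => /eqP/setP/(_ v); rewrite !inE uv vS.
Qed.

Definition path_count (f : nat -> bool) (j : nat) : nat := f j.+1 + ((0 < j) && f j.-1).

Lemma sum_ord_eq (k c : nat) (g : nat -> bool) :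
  \sum_(b < k) ((b == c :> nat) && g b) = (c < k) && g c.
Proof.
elim: k => [|k IH]; first by rewrite big_ord0.
rewrite big_ord_recr /= IH.
case: (ltngtP k c) => [lt|gt|<-]; last by rewrite ltnSn.
- by rewrite ltnS leqNgt lt.
- by rewrite addn0 ltnS (ltnW gt).
Qed.

Lemma sum_path_adj (k : nat) (j : 'I_k) (f : nat -> bool) :
  (forall b, k <= b -> f b = false) ->
  \sum_(b < k) (path_adj j b && f b) = path_count f j.
Proof.
move=> f_out; rewrite /path_adj /path_count.
rewrite (eq_bigr (fun b : 'I_k => ((b == j.+1 :> nat) && f b) + ((b.+1 == j :> nat) && f b)));
  last first.
  move=> b _; case: (f b); rewrite ?andbF // !andbT eq_sym.
  by case: (nat_of_ord b =P j.+1) => [->|] //=; rewrite gtn_eqF.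
rewrite big_split /= sum_ord_eq.
have -> : (j.+1 < k) && f j.+1 = f j.+1 by case: ltnP => // /f_out ->.
case: (nat_of_ord j) (ltn_ord j) => [|i] ltik /=; first by rewrite big1.
by under eq_bigr => b _ do rewrite eqSS; rewrite sum_ord_eq (ltnW ltik).
Qed.

Lemma path_adj_irr k (i : 'I_k) : path_adj i i = false.
Proof. by rewrite /path_adj !gtn_eqF. Qed.

Lemma grid_adj_split m k (x y : 'I_m * 'I_k) (b : bool) :
  grid_adj x y && b =
  (x.1 == y.1) && (path_adj x.2 y.2 && b) + (x.2 == y.2) && (path_adj x.1 y.1 && b) :> nat.
Proof.
rewrite /grid_adj; case: (x.1 =P y.1) => [->|_] /=; rewrite ?path_adj_irr.
- by case: b; case: (x.2 == y.2); case: (path_adj x.2 y.2).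
- by case: b; case: (x.2 == y.2); case: (path_adj x.1 y.1).
Qed.

Lemma sum_pick (T : finType) (t : T) (F : T -> bool) : \sum_u ((t == u) && F u) = F t.
Proof. by rewrite (bigD1 t) //= eqxx big1 ?addn0 // => u; rewrite eq_sym => /negbTE->. Qed.

(* A column is encoded by the number whose binary digit [i] says whether row [i] is in the set. *)
Definition bit (i c : nat) : bool := odd (iter i half c).
Definition col_code (x y z : bool) : nat := x + 2 * y + 4 * z.
Definition col_size (c : nat) : nat := bit 0 c + bit 1 c + bit 2 c.

Lemma bit0n i : bit i 0 = false.
Proof. by rewrite /bit (_ : iter i half 0 = 0) //; elim: i => //= i ->. Qed.

Lemma col_code_lt x y z : col_code x y z < 8. Proof. by case: x; case: y; case: z. Qed.

Lemma col_codeK c : c < 8 -> col_code (bit 0 c) (bit 1 c) (bit 2 c) = c.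
Proof. by do 8! case: c => [//|c]. Qed.

Lemma bit_code i x y z : bit i (col_code x y z) = nth false [:: x; y; z] i.
Proof.
case: i => [|[|[|i]]]; try by case: x; case: y; case: z.
rewrite /= nth_nil -addn3 /bit iterD (_ : iter 3 half _ = 0) -/(bit i 0) ?bit0n //.
by case: x; case: y; case: z.
Qed.

Definition cell_ok (a b c i : nat) : bool :=
  vertex_ok (bit i b) (bit i c + bit i a + path_count (bit^~ b) i).

Definition column_ok (a b c : nat) : bool := all (cell_ok a b c) (iota 0 3).

Fixpoint columns_ok (a : nat) (cs : seq nat) (c : nat) : bool :=
  if cs is b :: cs' then column_ok a b (head c cs') && columns_ok b cs' c else true.

Lemma columns_okP a cs c :
  reflect (forall j, j < size cs -> column_ok (nth 0 (a :: cs) j) (nth 0 cs j) (nth c cs j.+1))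
          (columns_ok a cs c).
Proof.
elim: cs a => [|b cs IH] a /=; first by constructor.
apply: (iffP andP) => [[ok_b /IH ok_cs] [|j] lt_j|ok].
- by case: cs {IH ok_cs lt_j} ok_b.
- exact: ok_cs.
split; first by have := ok 0 isT; case: cs {IH ok}.
by apply/IH => j lt_j; apply: (ok j.+1).
Qed.

Lemma columns_ok_cat a s1 s2 c :
  columns_ok a (s1 ++ s2) c = columns_ok a s1 (head c s2) && columns_ok (last a s1) s2 c.
Proof. by elim: s1 a => [|b s1 IH] a //=; rewrite IH andbA; case: s1 {IH}. Qed.

Section Grid.
Variable n : nat.
Implicit Type S : {set 'I_3 * 'I_n}.

Definition in_grid S (i j : nat) : bool :=
  [exists x in S, (x.1 == i :> nat) && (x.2 == j :> nat)].

Lemma in_gridE S (x : 'I_3 * 'I_n) : in_grid S x.1 x.2 = (x \in S).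
Proof.
apply/existsP/idP => [[y /and3P[yS /eqP e1 /eqP e2]]|xS]; last by exists x; rewrite xS !eqxx.
by have -> : x = y by case: x y e1 e2 {yS} => [? ?] [? ?] /= /val_inj-> /val_inj->.
Qed.

Lemma in_grid_out S i j : (3 <= i) || (n <= j) -> in_grid S i j = false.
Proof.
move=> out; apply/existsP => [[[a b] /and3P[_ /eqP /= e1 /eqP /= e2]]].
by move: out; rewrite -e1 -e2 [3 <= a]leqNgt [n <= b]leqNgt !ltn_ord.
Qed.

Definition column S (j : nat) : nat := col_code (in_grid S 0 j) (in_grid S 1 j) (in_grid S 2 j).

Definition columns S : seq nat := mkseq (column S) n.

Lemma bit_column S i j : bit i (column S j) = in_grid S i j.
Proof. by rewrite bit_code; case: i => [|[|[|i]]] //=; rewrite nth_nil in_grid_out. Qed.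

Lemma size_columns S : size (columns S) = n.
Proof. exact: size_mkseq. Qed.

Lemma nth_columns S j : nth 0 (columns S) j = column S j.
Proof.
case: (ltnP j n) => [lt_j|le_j]; first by rewrite nth_mkseq.
by rewrite nth_default ?size_columns // /column !in_grid_out // le_j orbT.
Qed.

Lemma columns_small S : all (fun c => c < 8) (columns S).
Proof. by apply/allP => c /mapP[j _ ->]; apply: col_code_lt. Qed.

Lemma sumn_columns S (F : nat -> nat) : sumn (map F (columns S)) = \sum_(j < n) F (column S j).
Proof.
by rewrite sumnE /columns /mkseq !big_map -(big_mkord xpredT (F \o column S)) /index_iota subn0.
Qed.

Lemma card_columns S : #|S| = sumn (map col_size (columns S)).
Proof.
rewrite sumn_columns -sum1_card big_mkcond /=.
rewrite (eq_bigr (fun x : 'I_3 * 'I_n => nat_of_bool (in_grid S x.1 x.2)));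
  last by move=> x _; rewrite in_gridE; case: ifP.
rewrite -(pair_bigA _ (fun (a : 'I_3) (b : 'I_n) => nat_of_bool (in_grid S a b))) exchange_big /=.
by apply: eq_bigr => j _; rewrite !big_ord_recl big_ord0 /col_size !bit_column addn0 addnA.
Qed.

Lemma card_nbhd_grid S (v : 'I_3 * 'I_n) :
  #|nbhd (@grid_adj 3 n) v :&: S| =
  path_count (in_grid S v.1) v.2 + path_count (in_grid S ^~ v.2) v.1.
Proof.
rewrite -sum1_card big_mkcond /=.
rewrite (eq_bigr (fun u : 'I_3 * 'I_n =>
   (v.1 == u.1) && (path_adj v.2 u.2 && in_grid S u.1 u.2) +
   (v.2 == u.2) && (path_adj v.1 u.1 && in_grid S u.1 u.2)));
  last by move=> u _; rewrite !inE in_gridE -grid_adj_split; case: ifP.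
rewrite big_split -(pair_bigA _ (fun (a : 'I_3) (b : 'I_n) =>
   nat_of_bool ((v.1 == a) && (path_adj v.2 b && in_grid S a b)))) /=.
rewrite -(pair_bigA _ (fun (a : 'I_3) (b : 'I_n) =>
   nat_of_bool ((v.2 == b) && (path_adj v.1 a && in_grid S a b)))) /= exchange_big /=.
rewrite !(eq_bigr _ (fun i _ => sum_pick _ _)).
rewrite sum_path_adj => [|b le_nb]; last by rewrite in_grid_out // le_nb orbT.
by rewrite (@sum_path_adj _ _ (in_grid S ^~ v.2)) // => a le_3a; rewrite in_grid_out // le_3a.
Qed.

Lemma bit_column_before S i j : bit i (nth 0 (0 :: columns S) j) = (0 < j) && in_grid S i j.-1.
Proof. by case: j => [|j]; rewrite /= ?nth_columns ?bit_column ?bit0n. Qed.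

Lemma vertex_ok_grid S (v : 'I_3 * 'I_n) :
  vertex_ok (v \in S) #|nbhd (@grid_adj 3 n) v :&: S| =
  cell_ok (nth 0 (0 :: columns S) v.2) (nth 0 (columns S) v.2) (nth 0 (columns S) v.2.+1) v.1.
Proof.
by rewrite card_nbhd_grid /cell_ok /path_count !nth_columns bit_column_before !bit_column in_gridE.
Qed.

Lemma indep12_columns S : indep12_set (@grid_adj 3 n) S <-> columns_ok 0 (columns S) 0.
Proof.
rewrite indep12_setP; split => [ok | /columns_okP ok v].
- apply/columns_okP => j; rewrite size_columns => lt_jn.
  apply/allP => i; rewrite mem_iota => /andP[_ lt_i3].
  by have := ok (Ordinal lt_i3, Ordinal lt_jn); rewrite vertex_ok_grid.
- by rewrite vertex_ok_grid; apply: (allP (ok v.2 _)); rewrite ?size_columns ?mem_iota ltn_ord.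
Qed.

Lemma columns_surj cs : size cs = n -> all (fun c => c < 8) cs -> exists S, columns S = cs.
Proof.
move=> size_cs small_cs; set S := [set x : 'I_3 * 'I_n | bit x.1 (nth 0 cs x.2)]; exists S.
have in_gridS i j : in_grid S i j = [&& i < 3, j < n & bit i (nth 0 cs j)].
  apply/existsP/and3P => [[x /and3P[]]|[lt_i3 lt_jn bit_ij]].
    by rewrite inE => Sx /eqP<- /eqP<-; rewrite !ltn_ord.
  by exists (Ordinal lt_i3, Ordinal lt_jn); rewrite inE /= bit_ij !eqxx.
apply: (@eq_from_nth _ 0); rewrite size_columns // => j lt_jn.
rewrite nth_columns /column !in_gridS lt_jn /= col_codeK //.
by apply: (allP small_cs); rewrite mem_nth ?size_cs.
Qed.
End Grid.

(* [option nat] stands for nat extended by +oo, which is [None]. *)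
Definition omin (x y : option nat) : option nat :=
  match x, y with
  | None, _ => y
  | _, None => x
  | Some a, Some b => Some (minn a b)
  end.

Definition oadd (p : nat) (x : option nat) : option nat := omap (addn p) x.

Definition ole (x : option nat) (m : nat) : bool := if x is Some a then a <= m else false.

Lemma oadd_omin p x y : oadd p (omin x y) = omin (oadd p x) (oadd p y).
Proof. by case: x => [a|]; case: y => [b|] //=; rewrite addn_minr. Qed.

Lemma oaddC p q x : oadd p (oadd q x) = oadd q (oadd p x).
Proof. by case: x => //= a; rewrite addnCA. Qed.

Lemma oadd_foldr_omin p (s : seq (option nat)) :
  oadd p (foldr omin None s) = foldr omin None (map (oadd p) s).
Proof. by elim: s => //= x s <-; rewrite oadd_omin. Qed.

Lemma nth_map_oadd p (v : seq (option nat)) i : nth None (map (oadd p) v) i = oadd p (nth None v i).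
Proof. by elim: v i => [|x v IH] [|i] //=. Qed.

Lemma ole_foldr_omin x (s : seq (option nat)) m : x \in s -> ole x m -> ole (foldr omin None s) m.
Proof.
have ole_omin y z : ole y m || ole z m -> ole (omin y z) m.
  by case: y => [a|]; case: z => [b|] //=; rewrite ?geq_min ?orbF.
elim: s => // y s IH; rewrite in_cons => /orP[/eqP<- x_m | /IH s_m /s_m s_min] /=;
  by apply: ole_omin; rewrite ?x_m ?s_min ?orbT.
Qed.

Lemma ole_oadd p x m : ole x m -> ole (oadd p x) (p + m).
Proof. by case: x => //= a; rewrite leq_add2l. Qed.

(* Entry [8 * a + b] of [dp m] is the least total size of [m] further columns that can follow
   the consecutive columns [a], [b] before an empty column; [dp_min n] starts with an empty
   column [a = 0] before the first one. *)
Definition dp_step (v : seq (option nat)) : seq (option nat) :=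
  mkseq (fun s => foldr omin None
    [seq oadd (col_size c) (nth None v (8 * (s %% 8) + c))
      | c <- iota 0 8 & column_ok (s %/ 8) (s %% 8) c]) 64.

Definition dp_init : seq (option nat) :=
  mkseq (fun s => if column_ok (s %/ 8) (s %% 8) 0 then Some 0 else None) 64.

Definition dp (m : nat) : seq (option nat) := iter m dp_step dp_init.

Definition dp_min (n : nat) : option nat :=
  foldr omin None [seq oadd (col_size b) (nth None (dp n.-1) b) | b <- iota 0 8].

Lemma state_coords a b : b < 8 -> (8 * a + b) %/ 8 = a /\ (8 * a + b) %% 8 = b.
Proof. by move=> lt_b; split; lia. Qed.

Lemma dp_le_cost a b cs : a < 8 -> all (fun c => c < 8) (b :: cs) -> columns_ok a (b :: cs) 0 ->
  ole (nth None (dp (size cs)) (8 * a + b)) (sumn (map col_size cs)).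
Proof.
elim: cs a b => [|c cs IH] a b lt_a /andP[lt_b small_cs] /andP[ok_abc ok_cs].
  rewrite /= nth_mkseq; last by lia.
  by have [-> ->] := state_coords a lt_b; rewrite ok_abc.
have lt_c : c < 8 by case/andP: small_cs.
rewrite /dp iterS nth_mkseq; last by lia.
have [-> ->] := state_coords a lt_b.
apply: (ole_foldr_omin (x := oadd (col_size c) (nth None (dp (size cs)) (8 * b + c)))).
  by apply/mapP; exists c; rewrite // mem_filter ok_abc mem_iota.
exact/ole_oadd/IH.
Qed.

Lemma dp_min_le_cost cs : cs != [::] -> all (fun c => c < 8) cs -> columns_ok 0 cs 0 ->
  ole (dp_min (size cs)) (sumn (map col_size cs)).
Proof.
case: cs => // b cs _ small ok; rewrite /dp_min -[(size _).-1]/(size cs).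
apply: (ole_foldr_omin (x := oadd (col_size b) (nth None (dp (size cs)) b))).
  by apply/mapP; exists b; rewrite // mem_iota; case/andP: small.
exact/ole_oadd/(dp_le_cost (a := 0)).
Qed.

Definition i12_grid3 (n : nat) : nat :=
  if n %% 4 == 2 then (3 * n + 8) %/ 4 else (3 * n + 4) %/ 4.

Lemma i12_grid3_add4 n : i12_grid3 (n + 4) = 3 + i12_grid3 n.
Proof. by rewrite /i12_grid3 modnDr; case: eqP => _; lia. Qed.

Lemma dp_step_oadd p v : dp_step (map (oadd p) v) = map (oadd p) (dp_step v).
Proof.
rewrite /dp_step /mkseq -map_comp; apply: eq_map => s /=.
rewrite oadd_foldr_omin -map_comp; congr foldr; apply: eq_map => c /=.
by rewrite nth_map_oadd oaddC.
Qed.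

Lemma dp_period : dp 10 = map (oadd 3) (dp 6).
Proof. by vm_compute. Qed.

Lemma dp_add4 m : 6 <= m -> dp (m + 4) = map (oadd 3) (dp m).
Proof.
elim: m => // m IH; rewrite leq_eqVlt => /orP[/eqP<- | lt_6m]; first exact: dp_period.
by rewrite addSn /dp !iterS -/(dp (m + 4)) -/(dp m) IH // dp_step_oadd.
Qed.

Lemma dp_min_add4 n : 7 <= n -> dp_min (n + 4) = oadd 3 (dp_min n).
Proof.
move=> le_7n; rewrite /dp_min oadd_foldr_omin -map_comp.
rewrite (_ : (n + 4).-1 = n.-1 + 4) ?dp_add4; try lia.
by congr foldr; apply: eq_map => b /=; rewrite nth_map_oadd oaddC.
Qed.

Lemma dp_min_small : all (fun n => dp_min n == Some (i12_grid3 n)) (iota 3 8).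
Proof. by vm_compute. Qed.

Lemma dp_minE n : 3 <= n -> dp_min n = Some (i12_grid3 n).
Proof.
elim/ltn_ind: n => n IH le_3n; case: (leqP n 10) => [le_n10 | lt_10n].
  by apply/eqP/(allP dp_min_small); rewrite mem_iota; lia.
have -> : n = (n - 4) + 4 by lia.
by rewrite dp_min_add4 ?IH ?i12_grid3_add4 //; lia.
Qed.

Definition block : seq nat := [:: 0; 5; 0; 2].

Definition pattern (h : seq nat) (k : nat) (t : seq nat) : seq nat :=
  h ++ flatten (nseq k block) ++ t.

Lemma columns_ok_pattern h k t :
  columns_ok 0 h 0 -> last 0 h = 2 -> columns_ok 2 t 0 -> head 0 t = 0 ->
  columns_ok 0 (pattern h k t) 0.
Proof.
move=> ok_h last_h ok_t head_t.
have [ok_bt head_bt] : columns_ok 2 (flatten (nseq k block) ++ t) 0 /\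
                       head 0 (flatten (nseq k block) ++ t) = 0.
  by elim: k => [|k [ok_k head_k]] //=; rewrite head_k ok_k.
by rewrite /pattern columns_ok_cat head_bt ok_h last_h.
Qed.

Lemma size_pattern h k t : size (pattern h k t) = size h + 4 * k + size t.
Proof. by rewrite /pattern !size_cat; elim: k => [|k IH] //=; lia. Qed.

Lemma sumn_pattern (F : nat -> nat) h k t :
  sumn (map F (pattern h k t)) = sumn (map F h) + k * sumn (map F block) + sumn (map F t).
Proof.
have sumn_blocks : sumn (map F (flatten (nseq k block))) = k * sumn (map F block).
  elim: k => // k IH; rewrite -[flatten _]/(block ++ _) map_cat sumn_cat IH mulSn //.
by rewrite /pattern !map_cat !sumn_cat sumn_blocks addnA.
Qed.

Lemma all_pattern (P : pred nat) h k t :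
  all P h -> all P block -> all P t -> all P (pattern h k t).
Proof.
move=> P_h P_block P_t; rewrite /pattern !all_cat P_h P_t andbT /=.
by elim: k => // k IH; rewrite -[flatten _]/(block ++ _) all_cat P_block.
Qed.

Definition witness_ends (n : nat) : seq nat * seq nat :=
  match n %% 4 with
  | 0 => ([:: 1; 4; 1; 2], [::])
  | 1 => ([:: 2], [::])
  | 2 => ([:: 1; 4; 1; 2], [:: 0; 5])
  | _ => ([:: 2], [:: 0; 5])
  end.

Definition witness (n : nat) : seq nat :=
  let: (h, t) := witness_ends n in pattern h ((n - size h - size t) %/ 4) t.

Lemma witness_spec n : 3 <= n ->
  [/\ columns_ok 0 (witness n) 0, all (fun c => c < 8) (witness n),
      size (witness n) = n & sumn (map col_size (witness n)) = i12_grid3 n].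
Proof.
move=> le_3n; rewrite /witness /witness_ends /i12_grid3.
have lt_r4 : n %% 4 < 4 by rewrite ltn_mod.
case r_n: (n %% 4) lt_r4 => [|[|[|[|r]]]] // _.
all: split; [by apply: columns_ok_pattern | by apply: all_pattern
            | rewrite size_pattern /=; lia | rewrite sumn_pattern /col_size /bit /=; lia].
Qed.

Theorem mainTheorem4 (n : nat) (hn : 3 <= n) :
  i12_number_is (@grid_adj 3 n)
    (if n %% 4 == 2 then (3 * n + 8) %/ 4 else (3 * n + 4) %/ 4).
Proof.
rewrite -/(i12_grid3 n); split.
- have [ok_w small_w size_w cost_w] := witness_spec hn.
  have [S columns_S] := columns_surj size_w small_w.
  exists S; split; first by rewrite indep12_columns columns_S.
  by rewrite card_columns columns_S cost_w.
- move=> S /indep12_columns ok_S.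
  have nonempty_S : columns S != [::] by rewrite -size_eq0 size_columns -lt0n; lia.
  have := dp_min_le_cost nonempty_S (columns_small S) ok_S.
  by rewrite card_columns size_columns dp_minE.
Qed.
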